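(* Let $n,d,J$ be positive integers with $n\geqslant d\geqslant2$, and let $\delta,\vartheta>0$. For every $j\in[J]$ let $\boldsymbol{X}_j=\langle X^j_s:s\in\binom{[n]}{d}\rangle$ be a boolean, spreadable, $d$-dimensional random array on $[n]$ which is $(\vartheta,\{1\})$-box independent and satisfies $|\mathbb{E}[X^j_s]-\delta|\leqslant\vartheta$ for all $s\in\binom{[n]}{d}$. If $\boldsymbol{X}$ is any mixture of $\boldsymbol{X}_1,\dots,\boldsymbol{X}_J$, then $\boldsymbol{X}$ is $(2^{d+2}\vartheta,\{1\})$-box independent.
   Context: $[n]=\{1,\dots,n\}$, $\binom{I}{d}$ is the set of $d$-element subsets of $I$. A random array is spreadable if for all $J,K\subseteq[n]$ with $|J|=|K|\geqslant d$, the subarrays $\langle X_s:s\in\binom{J}{d}\rangle$ and $\langle X_s:s\in\binom{K}{d}\rangle$ have the same law (identified via the increasing bijection $J\to K$). A mixture of $\boldsymbol{X}_1,\dots,\boldsymbol{X}_J$ is a boolean $d$-dimensional random array $\boldsymbol{X}=\langle X_s:s\in\binom{[n]}{d}\rangle$ such that for some convex coefficients $\lambda_1,\dots,\lambda_J$, $\mathbb{E}[\prod_{s\in\mathcal{F}}X_s]=\sum_{j=1}^J\lambda_j\mathbb{E}[\prod_{s\in\mathcal{F}}X^j_s]$ for every nonempty $\mathcal{F}\subseteq\binom{[n]}{d}$. A $d$-dimensional box of $[n]$ is $\{s\in\binom{[n]}{d}:|s\cap H_i|=1\ \forall i\in[d]\}$ for 2-element sets $H_1,\dots,H_d\subseteq[n]$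 with $\max(H_i)<\min(H_{i+1})$. A boolean array $\boldsymbol{X}$ is $(\vartheta,\{1\})$-box independent if for every $d$-dimensional box $B$ of $[n]$, $\mathbb{P}(\bigcap_{s\in B}[X_s=1])\leqslant\prod_{s\in B}\mathbb{P}([X_s=1])+\vartheta$ (vacuous if there is no such box). *)

From HB Require Import structures.
From mathcomp Require Import all_boot all_order all_algebra.
From mathcomp Require Import reals.
Set Implicit Arguments. Unset Strict Implicit. Unset Printing Implicit Defensive.
Import Order.TTheory GRing.Theory Num.Theory.
Local Open Scope ring_scope.

(* [n] is represented by 'I_n = {0,...,n-1} (with its natural order). *)
Notation dsub n d := {s : {set 'I_n} | #|s| == d}.

Notation cfg n d := {ffun dsub n d -> bool}.

Section Arrays.
Variable R : realType.
Variables n d : nat.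

(* The law of a boolean d-dimensional random array on [n]: a probability
   distribution on the finite set of configurations. *)
Definition is_law (mu : {ffun cfg n d -> R}) : Prop :=
  (forall x, 0 <= mu x) /\ \sum_(x : cfg n d) mu x = 1.

Definition moment (mu : {ffun cfg n d -> R}) (F : {set dsub n d}) : R :=
  \sum_(x : cfg n d) mu x * \prod_(s in F) ((x s)%:R : R).

Definition mean (mu : {ffun cfg n d -> R}) (s : dsub n d) : R :=
  \sum_(x : cfg n d) mu x * ((x s)%:R : R).

Definition prob1 (mu : {ffun cfg n d -> R}) (s : dsub n d) : R :=
  \sum_(x : cfg n d | x s) mu x.

Definition prob_all1 (mu : {ffun cfg n d -> R}) (B : {set dsub n d}) : R :=
  \sum_(x : cfg n d | [forall s in B, x s]) mu x.

(* value of configuration x at the set (f @: t); f is meant injective so that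
   f @: t is again a d-set (otherwise the default value false is returned) *)
Definition read_at k (f : 'I_k -> 'I_n) (x : cfg n d) (t : dsub k d) : bool :=
  match insub (f @: val t) : option (dsub n d) with
  | Some s => x s
  | None => false
  end.

(* the subarray <X_{f(t)} : t in binom([k],d)>, i.e. the subarray on J = f([k])
   identified with an array on [k] via the increasing bijection f *)
Definition subarray k (f : 'I_k -> 'I_n) (x : cfg n d) : {ffun dsub k d -> bool} :=
  [ffun t => read_at f x t].

Definition strictly_increasing k (f : 'I_k -> 'I_n) : Prop :=
  forall i j : 'I_k, (i < j)%N -> (f i < f j)%N.

Definition spreadable (mu : {ffun cfg n d -> R}) : Prop :=
  forall k (f g : 'I_k -> 'I_n), (d <= k)%N ->
    strictly_increasing f -> strictly_increasing g ->
    forall y : {ffun dsub k d -> bool},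
      \sum_(x : cfg n d | subarray f x == y) mu x = \sum_(x : cfg n d | subarray g x == y) mu x.

Definition box_sides (H : 'I_d -> {set 'I_n}) : Prop :=
  (forall i, #|H i| = 2%N) /\
  (forall i j : 'I_d, (i < j)%N -> forall a b, a \in H i -> b \in H j -> (a < b)%N).

Definition box (H : 'I_d -> {set 'I_n}) : {set dsub n d} :=
  [set s : dsub n d | [forall i, #|val s :&: H i| == 1%N]].

Definition box_indep (theta : R) (mu : {ffun cfg n d -> R}) : Prop :=
  forall H : 'I_d -> {set 'I_n}, box_sides H ->
    prob_all1 mu (box H) <= \prod_(s in box H) prob1 mu s + theta.

Definition mixture J (mu : {ffun cfg n d -> R}) (mus : 'I_J -> {ffun cfg n d -> R}) : Prop :=
  exists lam : 'I_J -> R,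
    [/\ forall j, 0 <= lam j, \sum_j lam j = 1 &
      forall F : {set dsub n d}, F != set0 ->
        moment mu F = \sum_j lam j * moment (mus j) F].

End Arrays.

From HB Require Import structures.
From mathcomp Require Import all_boot all_order all_algebra.
From mathcomp Require Import reals.
From mathcomp Require Import lra.
Set Implicit Arguments. Unset Strict Implicit. Unset Printing Implicit Defensive.
Import Order.TTheory GRing.Theory Num.Theory.
Local Open Scope ring_scope.

(* All component marginals lie within theta of delta, hence so do those of the mixture;
   so component and mixture marginals differ by at most 2 theta, and telescoping moves
   the product by at most 2 theta |B|.  A box has at most 2^d cells (a cell picks one
   point of each side), and averaging over the components gives
   (2^(d+1) + 1) theta <= 2^(d+2) theta. *)

Lemma ler_norm_prodB (R : realDomainType) (I : Type) (r : seq I) (a b : I -> R) e :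
  (forall i, 0 <= a i <= 1) -> (forall i, 0 <= b i <= 1) ->
  (forall i, `|a i - b i| <= e) ->
  `|\prod_(i <- r) a i - \prod_(i <- r) b i| <= (size r)%:R * e.
Proof.
move=> a01 b01 ab_e; elim: r => [|i r IHr].
  by rewrite !big_nil subrr normr0 mul0r.
have /andP[ai_ge0 ai_le1] := a01 i; have b_ge0 j : 0 <= b j by case/andP: (b01 j).
have pb_le1 : \prod_(j <- r) b j <= 1 by apply: prodr_ile1.
rewrite !big_cons /= -natr1 mulrDl mul1r.
have -> : a i * \prod_(j <- r) a j - b i * \prod_(j <- r) b j =
    a i * (\prod_(j <- r) a j - \prod_(j <- r) b j) + (a i - b i) * \prod_(j <- r) b j.
  by rewrite mulrBr mulrBl addrA subrK.
apply: (le_trans (ler_normD _ _)); rewrite !normrM (ger0_norm ai_ge0).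
rewrite (ger0_norm (prodr_ge0 _ (fun j _ => b_ge0 j))).
apply: lerD; first exact: le_trans (ler_piMl (normr_ge0 _) ai_le1) IHr.
exact: le_trans (ler_piMr (normr_ge0 _) pb_le1) (ab_e i).
Qed.

Section ConvexCombination.
Variables (R : realDomainType) (J : nat) (lam : 'I_J -> R).
Hypotheses (lam_ge0 : forall j, 0 <= lam j) (sum_lam : \sum_j lam j = 1).

Lemma convex_le (a : 'I_J -> R) c : (forall j, a j <= c) -> \sum_j lam j * a j <= c.
Proof.
move=> a_le; rewrite -[c]mul1r -sum_lam mulr_suml.
by apply: ler_sum => j _; apply: ler_wpM2l.
Qed.

Lemma convex_dist (a : 'I_J -> R) c e :
  (forall j, `|a j - c| <= e) -> `|\sum_j lam j * a j - c| <= e.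
Proof.
move=> a_near; have -> : \sum_j lam j * a j - c = \sum_j lam j * (a j - c).
  by rewrite (eq_bigr _ (fun j _ => mulrBr _ _ _)) sumrB -mulr_suml sum_lam mul1r.
apply: le_trans (ler_norm_sum _ _ _) _; rewrite -[e]mul1r -sum_lam mulr_suml.
by apply: ler_sum => j _; rewrite normrM ger0_norm // ler_wpM2l.
Qed.

End ConvexCombination.

Section Laws.
Variables (R : realType) (n d : nat).
Implicit Types (m : {ffun cfg n d -> R}) (B : {set dsub n d}) (s : dsub n d).

Lemma prob_all1_moment m B : prob_all1 m B = moment m B.
Proof.
rewrite /prob_all1 /moment big_mkcond; apply: eq_bigr => x _.
case: (boolP [forall s in B, x s]) => [/forall_inP all1 | /forall_inPn[s sB xs0]].
  by rewrite big1 ?mulr1 // => s /all1 ->.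
by rewrite (bigD1 s) //= (negbTE xs0) mul0r mulr0.
Qed.

Lemma prob1_prob_all1 m s : prob1 m s = prob_all1 m [set s].
Proof.
by apply: eq_bigl => x; apply/idP/forall_inP => [xs t /set1P-> | /(_ s (set11 s))].
Qed.

Lemma mean_prob1 m s : mean m s = prob1 m s.
Proof.
rewrite /mean /prob1 [RHS]big_mkcond; apply: eq_bigr => x _.
by case: (x s); rewrite ?mulr1 ?mulr0.
Qed.

Lemma prob1_ge0_le1 m : is_law m -> forall s, 0 <= prob1 m s <= 1.
Proof.
move=> [m_ge0 sum_m] s; rewrite sumr_ge0 //= -sum_m.
by rewrite [leRHS](bigID (fun x : cfg n d => x s)) /= lerDl sumr_ge0.
Qed.

Lemma prob_all1_set0 m : is_law m -> prob_all1 m set0 = 1.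
Proof. by case=> _ <-; apply: eq_bigl => x; apply/forall_inP => s; rewrite inE. Qed.

Lemma prod_prob1_le m m' B e : is_law m -> is_law m' ->
  (forall s, `|prob1 m s - prob1 m' s| <= e) ->
  \prod_(s in B) prob1 m s <= \prod_(s in B) prob1 m' s + #|B|%:R * e.
Proof.
move=> law_m law_m' near; rewrite -lerBlDl.
have := ler_norm_prodB (enum B) (prob1_ge0_le1 law_m) (prob1_ge0_le1 law_m') near.
by rewrite !big_enum -cardE; apply: le_trans (ler_norm _).
Qed.

End Laws.

Section BoxCombinatorics.
Variables (n d : nat) (H : 'I_d -> {set 'I_n}).
Hypothesis sidesH : box_sides H.

Lemma box_sides_inj i j a : a \in H i -> a \in H j -> i = j.
Proof.
have [_ ordH] := sidesH => ai aj; apply: val_inj.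
by case: (ltngtP i j) => // [/ordH/(_ _ _ ai aj)|/ordH/(_ _ _ aj ai)]; rewrite ltnn.
Qed.

Lemma box_mem_cover s : s \in box H -> val s \subset \bigcup_i H i.
Proof.
rewrite inE => /forallP sH.
have /all_sig[g gP] : forall i, {a | a \in val s :&: H i}.
  move=> i; case: (pickP (mem (val s :&: H i))) => [a ?|none]; first by exists a.
  by move: (sH i); rewrite (eq_card0 none).
have g_inj : injective g.
  move=> i j gij; have /setIP[_ gi] := gP i; have /setIP[_ gj] := gP j.
  by apply: box_sides_inj gi _; rewrite gij.
have g_onto : g @: [set: 'I_d] = val s.
  apply/eqP; rewrite eqEcard card_imset // cardsT card_ord (eqP (valP s)) leqnn.
  rewrite andbT.
  by apply/subsetP => _ /imsetP[i _ ->]; have /setIP[] := gP i.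
apply/subsetP => a; rewrite -g_onto => /imsetP[i _ ->].
by apply/bigcupP; exists i => //; have /setIP[] := gP i.
Qed.

Lemma box_mem_partition s : s \in box H -> \bigcup_i (val s :&: H i) = val s.
Proof. by move/box_mem_cover/setIidPl; rewrite big_distrr. Qed.

Lemma card_box_le : (#|box H| <= 2 ^ d)%N.
Proof.
have [sides2 _] := sidesH.
pose trace (s : dsub n d) := [ffun i => val s :&: H i].
pose cells i := [set A : {set 'I_n} | A \subset H i & #|A| == 1%N].
have trace_inj : {in box H &, injective trace}.
  move=> s t sB tB /ffunP eq_st; apply: val_inj.
  rewrite -(box_mem_partition sB) -(box_mem_partition tB).
  by apply: eq_bigr => i _; have := eq_st i; rewrite !ffunE.
have trace_cells : trace @: box H \subset family cells.
  apply/subsetP => _ /imsetP[s sB ->]; apply/familyP => i.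
  by move: sB; rewrite !inE ffunE subsetIr => /forallP ->.
rewrite -(card_in_imset trace_inj); apply: leq_trans (subset_leq_card trace_cells) _.
rewrite card_family foldrE big_map big_enum /=.
under eq_bigr do rewrite cards_draws sides2.
by rewrite prod_nat_const card_ord.
Qed.

End BoxCombinatorics.

Section Mixture.
Variables (R : realType) (n d J : nat).
Variables (mu : {ffun cfg n d -> R}) (mus : 'I_J -> {ffun cfg n d -> R}).
Variable lam : 'I_J -> R.
Hypotheses (lam_ge0 : forall j, 0 <= lam j) (sum_lam : \sum_j lam j = 1).
Hypothesis moment_mu :
  forall F, F != set0 -> moment mu F = \sum_j lam j * moment (mus j) F.
Hypotheses (law_mu : is_law mu) (law_mus : forall j, is_law (mus j)).

Lemma prob_all1_mixture B : prob_all1 mu B = \sum_j lam j * prob_all1 (mus j) B.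
Proof.
have [->|B_neq0] := eqVneq B set0.
  (* [mixture] only constrains nonempty families; the empty one has mass 1. *)
  rewrite prob_all1_set0 // -[LHS]sum_lam; apply: eq_bigr => j _.
  by rewrite prob_all1_set0 ?mulr1.
rewrite prob_all1_moment moment_mu //.
by under [RHS]eq_bigr do rewrite prob_all1_moment.
Qed.

Lemma prob1_mixture_dist delta theta :
  (forall j s, `|prob1 (mus j) s - delta| <= theta) ->
  forall j s, `|prob1 (mus j) s - prob1 mu s| <= 2 * theta.
Proof.
move=> near_delta j s.
have mu_near : `|prob1 mu s - delta| <= theta.
  rewrite prob1_prob_all1 prob_all1_mixture.
  by apply: convex_dist => // k; rewrite -prob1_prob_all1.
apply: le_trans (ler_distD delta _ _) _.
by rewrite mulr_natl mulr2n (distrC delta) lerD.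
Qed.

End Mixture.

Theorem proposition8p4 (R : realType) (n d J : nat) (delta theta : R)
  (mus : 'I_J -> {ffun cfg n d -> R}) (mu : {ffun cfg n d -> R}) :
  (0 < J)%N -> (2 <= d)%N -> (d <= n)%N -> 0 < delta -> 0 < theta ->
  (forall j, is_law (mus j)) ->
  (forall j, spreadable (mus j)) ->
  (forall j, box_indep theta (mus j)) ->
  (forall j (s : dsub n d), `|mean (mus j) s - delta| <= theta) ->
  is_law mu -> mixture mu mus ->
  box_indep (2 ^+ (d + 2) * theta) mu.
Proof.
move=> _ _ _ _ theta_gt0 law_mus _ indep_mus mean_mus law_mu.
move=> [lam [lam_ge0 sum_lam moment_mu]] H sidesH; set N := #|box H|.
have near j s : `|prob1 (mus j) s - prob1 mu s| <= 2 * theta.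
  apply: (prob1_mixture_dist lam_ge0 sum_lam moment_mu law_mu law_mus) => k t.
  by rewrite -mean_prob1.
have slack : N%:R * (2 * theta) + theta <= 2 ^+ (d + 2) * theta.
  have : (N%:R <= 2 ^+ d :> R) by rewrite -natrX ler_nat card_box_le.
  have : (1 <= 2 ^+ d :> R) by rewrite exprn_ege1 ?ler1n.
  rewrite exprD; nra.
rewrite (prob_all1_mixture sum_lam moment_mu law_mu law_mus).
apply: (convex_le lam_ge0 sum_lam) => j; apply: le_trans (indep_mus j H sidesH) _.
have := prod_prob1_le (box H) (law_mus j) law_mu (near j); rewrite -/N.
lra.
Qed.
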